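(* Let $(R,d,P)$ be a commutative differential Rota–Baxter algebra of weight $\lambda$ over a commutative ring $\mathbf{k}$. For $u,v\in R$ put $\phi(u,v):=P(d(u)P(v))-uP(v)+P(uv)+\lambda P(d(u)v)$. Then for all $u,v,w\in R$: (1) $d(\phi(u,v))=0$; (2) $\phi(u,v)P(w)=P(\phi(u,v)w)+\phi(u,wP(v))+\phi(u,vP(w))+\lambda\,\phi(u,vw)$.
   Context: A commutative differential Rota–Baxter algebra of weight $\lambda\in\mathbf{k}$ is a commutative $\mathbf{k}$-algebra $R$ with linear maps $d,P:R\to R$ such that $d(1)=0$, $d(uv)=d(u)v+ud(v)+\lambda d(u)d(v)$, $P(u)P(v)=P(uP(v))+P(P(u)v)+\lambda P(uv)$, and $d\circ P=\mathrm{id}_R$. *)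

From HB Require Import structures.
From mathcomp Require Import all_boot all_order all_algebra.
Set Implicit Arguments. Unset Strict Implicit. Unset Printing Implicit Defensive.
Import GRing.Theory.
Local Open Scope ring_scope.

Definition is_diffRB (k : comPzRingType) (R : comAlgType k) (lam : k)
    (d P : {linear R -> R}) : Prop :=
  [/\ d 1 = 0,
      (forall u v : R, d (u * v) = d u * v + u * d v + lam *: (d u * d v)),
      (forall u v : R, P u * P v = P (u * P v) + P (P u * v) + lam *: P (u * v))
    & (forall u : R, d (P u) = u)].

Definition phiRB (k : comPzRingType) (R : comAlgType k) (lam : k)
    (d P : {linear R -> R}) (u v : R) : R :=
  P (d u * P v) - u * P v + P (u * v) + lam *: P (d u * v).

From HB Require Import structures.
From mathcomp Require Import all_boot all_order all_algebra.
From mathcomp Require Import ring.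
Set Implicit Arguments. Unset Strict Implicit. Unset Printing Implicit Defensive.
Import GRing.Theory.
Local Open Scope ring_scope.

(* Write  c(x) := P(d x) - x  for the "defect" of x: since
   d (P y) = y, every c(x) is a constant, i.e. d (c x) = 0.  Expanding
   d (u * P v) with the weighted Leibniz rule shows that the paper's
   phi(u,v) is exactly c(u * P v).  Part (1) is therefore the constancy of
   defects.  For part (2) we show the general identity
       c(x) * P w = P (c(x) * w) + c(x * P w),
   obtained from the Leibniz rule for d (x * P w) and the Rota-Baxter
   identity applied to P (d x) * P w.  Taking x = u * P v and expanding
   P v * P w once more by the Rota-Baxter identity splits
   c(u * P v * P w) into phi(u, w P v) + phi(u, v P w) + lam phi(u, v w),
   using only the linearity of c. *)

Section DefectCalculus.

Variables (k : comPzRingType) (R : comAlgType k) (lam : k).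
Variables (d P : {linear R -> R}).

(* The axioms of a differential Rota-Baxter algebra used below. *)
Hypothesis d_mul : forall u v : R,
  d (u * v) = d u * v + u * d v + lam *: (d u * d v).
Hypothesis P_mul : forall u v : R,
  P u * P v = P (u * P v) + P (P u * v) + lam *: P (u * v).
Hypothesis d_P : forall u : R, d (P u) = u.

Definition defect (x : R) : R := P (d x) - x.

Lemma d_defect (x : R) : d (defect x) = 0.
Proof. by rewrite /defect linearB /= d_P subrr. Qed.

Lemma defectD (x y : R) : defect (x + y) = defect x + defect y.
Proof. rewrite /defect !linearD /=; ring. Qed.

Lemma defectZ (a : k) (x : R) : defect (a *: x) = a *: defect x.
Proof. by rewrite /defect scalerBr -!linearZ. Qed.

Lemma phiRB_defect (u v : R) : phiRB lam d P u v = defect (u * P v).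
Proof.
rewrite /phiRB /defect d_mul d_P !linearD linearZ /=.
by rewrite [RHS]addrAC (addrAC (P (d u * P v)) (P (u * v))).
Qed.

Lemma defect_mulP (x w : R) :
  defect x * P w = P (defect x * w) + defect (x * P w).
Proof.
rewrite /defect d_mul d_P mulrBl P_mul mulrBl !linearD linearN linearZ /=.
ring.
Qed.

Lemma defect_mulPP (u v w : R) :
  defect (u * P v * P w) =
  phiRB lam d P u (w * P v) + phiRB lam d P u (v * P w)
  + lam *: phiRB lam d P u (v * w).
Proof.
rewrite !phiRB_defect -mulrA P_mul (mulrC (P v) w).
by rewrite !mulrDr -scalerAr !defectD defectZ [X in X + _]addrC.
Qed.

End DefectCalculus.

Theorem mainTheorem6 (k : comPzRingType) (R : comAlgType k) (lam : k)
    (d P : {linear R -> R}) :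
  is_diffRB lam d P ->
  forall u v w : R,
    d (phiRB lam d P u v) = 0 /\
    phiRB lam d P u v * P w =
      P (phiRB lam d P u v * w) + phiRB lam d P u (w * P v)
      + phiRB lam d P u (v * P w) + lam *: phiRB lam d P u (v * w).
Proof.
case=> _ d_mul P_mul d_P u v w.
have phiE := phiRB_defect d_mul d_P.
split; first by rewrite phiE d_defect.
rewrite phiE (defect_mulP d_mul P_mul d_P) (defect_mulPP d_mul P_mul d_P).
by rewrite !addrA.
Qed.
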